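(* Assume $\mathcal E$ is stable under pullback. Let $c$ be a closure operator on $\mathcal A$ and let $X\in\mathcal X$ be $c^\rho$-compact. Factor $\rho_X=\rho_X^{\mathcal M}\rho_X^{\mathcal E}$ with $\rho_X^{\mathcal E}\in\mathcal E$, $\rho_X^{\mathcal M}\in\mathcal M$, and let $R^{\mathcal E}X$ denote the codomain of $\rho_X^{\mathcal E}$. Then: (a) $R^{\mathcal E}X$ is $c^\rho$-compact; (b) if $RX$ is $c$-separated, then $\rho_X\in\mathcal E$ and $RX$ is $c$-compact.
   Context: Standing setting. $\mathcal X$ and $\mathcal A$ are finitely complete categories; $\mathcal X$ carries a proper factorization system $(\mathcal E,\mathcal M)$ and $\mathcal A$ a proper factorization system $(\mathcal F,\mathcal N)$ (proper: every member of $\mathcal E$, resp. $\mathcal F$, is an epimorphism and every member of $\mathcal M$, resp. $\mathcal N$, is a monomorphism). $\mathcal A$ is a full reflective subcategory of $\mathcal X$ with reflector $R:\mathcal X\to\mathcal A$ and reflection (unit) $\rho_X:X\to RX$; as in the paper's setting, $\mathcal N\subseteq\mathcal M$ and $R\mathcal E\subseteq\mathcal F$. For $X\in\mathcal X$, $\operatorname{sub}X$ is the class $\mathcal M/X$ of $\mathcal M$-morphisms with codomain $X$, preordered by $m\le n$ iff $m=nj$ for some morphism $j$; for $A\in\mathcal A$, $\operatorname{sub}_{\mathcal A}A=\mathcal N/A$ with the same preorder. For $f:X\to Y$ and $m\in\operatorname{sub}X$, the image $f(m)\in\operatorname{sub}Y$ is the $\mathcal M$-part of the $(\mathcal E,\mathcal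 M)$-factorization of $fm$, and for $n\in\operatorname{sub}Y$ the preimage $f^{-1}(n)\in\operatorname{sub}X$ is the pullback of $n$ along $f$ (analogously in $\mathcal A$ using $(\mathcal F,\mathcal N)$). A closure operator $c$ on $\mathcal A$ (with respect to $\mathcal N$) is a family of maps $c_A:\operatorname{sub}_{\mathcal A}A\to\operatorname{sub}_{\mathcal A}A$ ($A\in\mathcal A$) such that $m\le c_A(m)$, $m\le n\Rightarrow c_A(m)\le c_A(n)$, and $f(c_A(m))\le c_B(f(m))$ for every morphism $f:A\to B$ of $\mathcal A$; closure operators on $\mathcal X$ (with respect to $\mathcal M$) are defined likewise. For an arbitrary morphism $g:M\to A$ of $\mathcal A$, write $g(1_M)$ for the $\mathcal N$-part of its $(\mathcal F,\mathcal N)$-factorization and put $c_A(g):=c_A(g(1_M))$. The $R$-initial lift of $c$ is the closure operator $c^\rho$ on $\mathcal X$ given by $c^\rho_X(m)=\rho_X^{-1}(c_{RX}(Rm))$ for $X\in\mathcal X$, $m\in\operatorname{sub}X$. A subobject $m$ is $c$-closed if $c(m)=m$; an object $A$ is $c$-separated if its diagonal $\delta_A:A\to A\times A$ is $c$-closed. For a closure operator $d$ on a category, an object $X$ is $d$-compact if for every object $Y$ the projection $\pi_Y:X\times Y\to Y$ is $d$-preserving, i.e. $\pi_Y(d_{X\times Y}(m))=d_Y(\pi_Y(m))$ for every subobject $m$ of $X\times Y$ (for $c$-compactness of an object of $\mathcal A$, $Y$ ranges over $\mathcal A$ and subobjects over $\operatorname{sub}_{\mathcal A}$; for $c^\rho$-compactness,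 over $\mathcal X$ and $\operatorname{sub}$). *)

Set Implicit Arguments.
Unset Strict Implicit.

Record Category := {
  ob :> Type;
  hom : ob -> ob -> Type;
  idm : forall a, hom a a;
  comp : forall a b c, hom b c -> hom a b -> hom a c;
  comp_id_l : forall a b (f : hom a b), comp (idm b) f = f;
  comp_id_r : forall a b (f : hom a b), comp f (idm a) = f;
  comp_assoc : forall a b c d (h : hom c d) (g : hom b c) (f : hom a b),
      comp h (comp g f) = comp (comp h g) f }.

Arguments hom {_} _ _.
Arguments idm {_} _.
Arguments comp {_ _ _ _} _ _.
Declare Scope cat_scope.
Notation "g ∘ f" := (comp g f) (at level 40, left associativity) : cat_scope.
Open Scope cat_scope.

Definition MorClass (C : Category) := forall (a b : C), hom a b -> Prop.

Definition is_mono {C : Category} {a b : C} (f : hom a b) :=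
  forall z (u v : hom z a), f ∘ u = f ∘ v -> u = v.
Definition is_epi {C : Category} {a b : C} (f : hom a b) :=
  forall z (u v : hom b z), u ∘ f = v ∘ f -> u = v.
Definition is_iso {C : Category} {a b : C} (f : hom a b) :=
  exists g : hom b a, g ∘ f = idm a /\ f ∘ g = idm b.

Definition is_pullback {C : Category} {a b c p : C}
    (f : hom a c) (g : hom b c) (p1 : hom p a) (p2 : hom p b) :=
  f ∘ p1 = g ∘ p2 /\
  forall q (q1 : hom q a) (q2 : hom q b), f ∘ q1 = g ∘ q2 ->
    exists u : hom q p, (p1 ∘ u = q1 /\ p2 ∘ u = q2) /\
      forall u' : hom q p, p1 ∘ u' = q1 -> p2 ∘ u' = q2 -> u' = u.

Record FinComplete (C : Category) := {
  term : C;
  term_mor : forall a : C, hom a term;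
  term_uniq : forall a (u : hom a term), u = term_mor a;
  prod : C -> C -> C;
  pr1 : forall a b, hom (prod a b) a;
  pr2 : forall a b, hom (prod a b) b;
  pairing : forall q a b, hom q a -> hom q b -> hom q (prod a b);
  pairing_pr1 : forall q a b (f : hom q a) (g : hom q b), pr1 a b ∘ pairing f g = f;
  pairing_pr2 : forall q a b (f : hom q a) (g : hom q b), pr2 a b ∘ pairing f g = g;
  pairing_uniq : forall q a b (u : hom q (prod a b)),
      u = pairing (pr1 a b ∘ u) (pr2 a b ∘ u);
  pb : forall a b c, hom a c -> hom b c -> C;
  pb1 : forall a b c (f : hom a c) (g : hom b c), hom (pb f g) a;
  pb2 : forall a b c (f : hom a c) (g : hom b c), hom (pb f g) b;
  pb_is_pullback : forall a b c (f : hom a c) (g : hom b c),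
      is_pullback f g (pb1 f g) (pb2 f g) }.

Arguments prod {_} _ _ _.
Arguments pr1 {_} _ _ _.
Arguments pr2 {_} _ _ _.
Arguments pairing {_} _ {_ _ _} _ _.
Arguments pb {_} _ {_ _ _} _ _.
Arguments pb1 {_} _ {_ _ _} _ _.
Arguments pb2 {_} _ {_ _ _} _ _.

Definition diag {C : Category} (L : FinComplete C) (a : C) : hom a (prod L a a) :=
  pairing L (idm a) (idm a).

Record FactSys (C : Category) := {
  fE : MorClass C;
  fM : MorClass C;
  E_iso : forall a b (f : hom a b), is_iso f -> fE f;
  M_iso : forall a b (f : hom a b), is_iso f -> fM f;
  E_comp_iso : forall a b c (e : hom a b) (h : hom b c) (h' : hom c a),
      fE e -> is_iso h -> is_iso h' -> fE (h ∘ e) /\ fE (e ∘ h');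
  M_comp_iso : forall a b c (m : hom a b) (h : hom b c) (h' : hom c a),
      fM m -> is_iso h -> is_iso h' -> fM (h ∘ m) /\ fM (m ∘ h');
  fmid : forall a b, hom a b -> C;
  fe : forall a b (f : hom a b), hom a (fmid f);
  fm : forall a b (f : hom a b), hom (fmid f) b;
  fe_E : forall a b (f : hom a b), fE (fe f);
  fm_M : forall a b (f : hom a b), fM (fm f);
  fact_eq : forall a b (f : hom a b), fm f ∘ fe f = f;
  diagonal : forall a b c d (e : hom a b) (m : hom c d) (u : hom a c) (v : hom b d),
      fE e -> fM m -> v ∘ e = m ∘ u ->
      exists w : hom b c, (w ∘ e = u /\ m ∘ w = v) /\
        forall w' : hom b c, w' ∘ e = u -> m ∘ w' = v -> w' = w }.

Arguments fE {_} _ {_ _} _.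
Arguments fM {_} _ {_ _} _.
Arguments fmid {_} _ {_ _} _.
Arguments fe {_} _ {_ _} _.
Arguments fm {_} _ {_ _} _.

Definition proper {C : Category} (F : FactSys C) :=
  (forall a b (f : hom a b), fE F f -> is_epi f) /\
  (forall a b (f : hom a b), fM F f -> is_mono f).

Record Functor (C D : Category) := {
  F0 :> C -> D;
  F1 : forall a b, hom a b -> hom (F0 a) (F0 b);
  F1_id : forall a, F1 (idm a) = idm (F0 a);
  F1_comp : forall a b c (g : hom b c) (f : hom a b), F1 (g ∘ f) = F1 g ∘ F1 f }.
Arguments F1 {_ _} _ {_ _} _.

Record Setting := {
  X : Category;
  A : Category;
  XL : FinComplete X;
  AL : FinComplete A;
  XF : FactSys X;
  AF : FactSys A;
  XF_proper : proper XF;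
  AF_proper : proper AF;
  Inc : Functor A X;
  Inc_inj : forall a b : A, Inc a = Inc b -> a = b;
  Inc_full : forall (a b : A) (f : hom (Inc a) (Inc b)), exists g : hom a b, F1 Inc g = f;
  Inc_faithful : forall (a b : A) (g g' : hom a b), F1 Inc g = F1 Inc g' -> g = g';
  Rf : Functor X A;
  rho : forall x : X, hom x (Inc (Rf x));
  rho_nat : forall (x y : X) (f : hom x y), F1 Inc (F1 Rf f) ∘ rho x = rho y ∘ f;
  rho_univ : forall (x : X) (a : A) (f : hom x (Inc a)),
      exists g : hom (Rf x) a, F1 Inc g ∘ rho x = f /\
        forall g' : hom (Rf x) a, F1 Inc g' ∘ rho x = f -> g' = g;
  N_sub_M : forall (a b : A) (n : hom a b), fM AF n -> fM XF (F1 Inc n);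
  RE_sub_F : forall (x y : X) (e : hom x y), fE XF e -> fE AF (F1 Rf e) }.

Arguments X : clear implicits.
Arguments A : clear implicits.
Arguments XL : clear implicits.
Arguments AL : clear implicits.
Arguments XF : clear implicits.
Arguments AF : clear implicits.
Arguments XF_proper : clear implicits.
Arguments AF_proper : clear implicits.
Arguments Inc : clear implicits.
Arguments Inc_inj : clear implicits.
Arguments Inc_full : clear implicits.
Arguments Inc_faithful : clear implicits.
Arguments Rf : clear implicits.
Arguments rho : clear implicits.
Arguments rho_nat : clear implicits.
Arguments rho_univ : clear implicits.
Arguments N_sub_M : clear implicits.
Arguments RE_sub_F : clear implicits.

Definition E_pullback_stable (S : Setting) :=
  forall (a b c p : X S) (f : hom a c) (g : hom b c) (p1 : hom p a) (p2 : hom p b),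
    is_pullback f g p1 p2 -> fE (XF S) g -> fE (XF S) p1.

(* morphisms with codomain x; subobjects are those whose arrow lies in M (resp. N) *)
Record arr {C : Category} (x : C) := Arr { adom : C; amor : hom adom x }.
Arguments Arr {_ _ _} _.
Arguments adom {_ _} _.
Arguments amor {_ _} _.

Definition sub_le {C : Category} {x : C} (m n : arr x) :=
  exists j : hom (adom m) (adom n), amor m = amor n ∘ j.
Definition sub_eq {C : Category} {x : C} (m n : arr x) := sub_le m n /\ sub_le n m.

Definition image {C : Category} (F : FactSys C) {x y : C} (f : hom x y) (m : arr x) : arr y :=
  Arr (fm F (f ∘ amor m)).
(* g(1_M): M-part of the factorization of an arbitrary morphism g *)
Definition mpart {C : Category} (F : FactSys C) {a b : C} (g : hom a b) : arr b :=
  Arr (fm F g).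
Definition preimage {C : Category} (L : FinComplete C) {x y : C} (f : hom x y) (n : arr y) : arr x :=
  Arr (pb1 L f (amor n)).

Record ClosureOp {C : Category} (F : FactSys C) := {
  cl : forall a : C, arr a -> arr a;
  cl_sub : forall a (m : arr a), fM F (amor m) -> fM F (amor (cl m));
  cl_ext : forall a (m : arr a), fM F (amor m) -> sub_le m (cl m);
  cl_mono : forall a (m n : arr a), fM F (amor m) -> fM F (amor n) ->
      sub_le m n -> sub_le (cl m) (cl n);
  cl_cont : forall a b (f : hom a b) (m : arr a), fM F (amor m) ->
      sub_le (image F f (cl m)) (cl (image F f m)) }.
Arguments cl {_ _} _ {_} _.

(* c_A(g) := c_A(g(1_M)) for an arbitrary morphism g *)
Definition clg {C : Category} {F : FactSys C} (c : ClosureOp F) {a b : C} (g : hom a b) : arr b :=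
  cl c (mpart F g).

Definition Inc_arr (S : Setting) {a : A S} (n : arr a) : arr (Inc S a) :=
  Arr (F1 (Inc S) (amor n)).
Definition crho (S : Setting) (c : ClosureOp (AF S)) (x : X S) (m : arr x) : arr x :=
  preimage (XL S) (rho S x) (Inc_arr (clg c (F1 (Rf S) (amor m)))).

Definition c_closed {C : Category} {F : FactSys C} (c : ClosureOp F) {a b : C} (g : hom a b) :=
  sub_eq (clg c g) (Arr g).
Definition c_separated {C : Category} (L : FinComplete C) {F : FactSys C}
    (c : ClosureOp F) (a : C) := c_closed c (diag L a).

Definition compact {C : Category} (L : FinComplete C) (F : FactSys C)
    (d : forall a : C, arr a -> arr a) (x : C) :=
  forall (y : C) (m : arr (prod L x y)), fM F (amor m) ->
    sub_eq (image F (pr2 L x y) (d _ m)) (d y (image F (pr2 L x y) m)).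

(* Part (a) is an instance of a general fact: when [E] is stable under pullback,
   [E]-images of compact objects are compact, for any monotone, continuous closure.
   For (b), apply compactness of [R^E X] to the graph of [ρ_M]: its projection is
   [ρ_M], whose [c^ρ]-closure is all of [RX] because [ρ_M] carries [ρ_X], while
   separation of [RX] keeps the [c^ρ]-closure of the graph inside the graph.  So
   [ρ_M] is a split epimorphism in [M], hence an isomorphism, and [ρ_X ∈ E].  Then
   [RX] is an [E]-image of [X], hence [c^ρ]-compact, and [c]-compactness follows
   since [c^ρ] restricts to [c] on [A]. *)


Lemma sub_le_trans {C : Category} {x : C} (m n p : arr x) :
  sub_le m n -> sub_le n p -> sub_le m p.
Proof.
  intros [j Hj] [k Hk]. exists (k ∘ j). rewrite Hj, Hk. symmetry. apply comp_assoc.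
Qed.

Lemma pairing_comp {C : Category} (L : FinComplete C) {q r a b : C}
  (f : hom q a) (g : hom q b) (h : hom r q) :
  pairing L f g ∘ h = pairing L (f ∘ h) (g ∘ h).
Proof.
  rewrite (pairing_uniq (pairing L f g ∘ h)), !comp_assoc, pairing_pr1, pairing_pr2.
  reflexivity.
Qed.

Lemma pairing_ext {C : Category} (L : FinComplete C) {q a b : C} (u v : hom q (prod L a b)) :
  pr1 L a b ∘ u = pr1 L a b ∘ v -> pr2 L a b ∘ u = pr2 L a b ∘ v -> u = v.
Proof.
  intros H1 H2. rewrite (pairing_uniq u), (pairing_uniq v), H1, H2. reflexivity.
Qed.

Lemma is_pullback_sym {C : Category} {a b c p : C}
  (f : hom a c) (g : hom b c) (p1 : hom p a) (p2 : hom p b) :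
  is_pullback f g p1 p2 -> is_pullback g f p2 p1.
Proof.
  intros [Hc Hu]. split; [symmetry; exact Hc|].
  intros q q1 q2 Hq. destruct (Hu q q2 q1 (eq_sym Hq)) as [u [[U1 U2] Uu]].
  exists u. split; [split; assumption|]. intros u' H1 H2. apply Uu; assumption.
Qed.

Lemma prod_map_pullback {C : Category} (L : FinComplete C) {x z : C} (y : C) (e : hom x z) :
  is_pullback (pr1 L z y) e (pairing L (e ∘ pr1 L x y) (pr2 L x y)) (pr1 L x y).
Proof.
  split; [apply pairing_pr1|].
  intros q q1 q2 Hq. exists (pairing L q2 (pr2 L z y ∘ q1)). split; [split|].
  - rewrite pairing_comp, <- !comp_assoc, pairing_pr1, pairing_pr2.
    apply pairing_ext; rewrite ?pairing_pr1, ?pairing_pr2; [symmetry; exact Hq|reflexivity].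
  - apply pairing_pr1.
  - intros u' H1 H2. apply pairing_ext; rewrite ?pairing_pr1, ?pairing_pr2; [exact H2|].
    rewrite <- H1, comp_assoc, pairing_pr2. reflexivity.
Qed.

Lemma iso_comp_pullback {C : Category} {a b c : C} (e : hom a b) (h : hom b c) (h' : hom c b) :
  h' ∘ h = idm b -> h ∘ h' = idm c -> is_pullback h' e (h ∘ e) (idm a).
Proof.
  intros Hh'h Hhh'. split; [rewrite comp_assoc, Hh'h, comp_id_l, comp_id_r; reflexivity|].
  intros q q1 q2 Hq. exists q2. split; [split|].
  - rewrite <- comp_assoc, <- Hq, comp_assoc, Hhh', comp_id_l. reflexivity.
  - apply comp_id_l.
  - intros u _ Hu. rewrite comp_id_l in Hu. exact Hu.
Qed.

Lemma le_preimage {C : Category} (L : FinComplete C) {x y : C} (f : hom x y) (n : arr y)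
  (t : arr x) (v : hom (adom t) (adom n)) :
  f ∘ amor t = amor n ∘ v -> sub_le t (preimage L f n).
Proof.
  intros H. destruct (proj2 (pb_is_pullback L f (amor n)) _ _ _ H) as [u [[U1 _] _]].
  exists u. symmetry. exact U1.
Qed.

Section Factorization.
Context {C : Category} (F : FactSys C).

Lemma mpart_le {a b : C} (f : hom a b) (n : arr b) (h : hom a (adom n)) :
  fM F (amor n) -> f = amor n ∘ h -> sub_le (mpart F f) n.
Proof.
  intros Hn Hf. rewrite <- (fact_eq F f) in Hf.
  destruct (diagonal (fe_E F f) Hn Hf) as [w [[_ Hw] _]].
  exists w. symmetry. exact Hw.
Qed.

Lemma factor_of_mpart_le {a b : C} (f : hom a b) (n : arr b) :
  sub_le (mpart F f) n -> exists h, f = amor n ∘ h.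
Proof.
  intros [j Hj]. simpl in Hj. exists (j ∘ fe F f). rewrite comp_assoc.
  transitivity (fm F f ∘ fe F f); [symmetry; apply fact_eq | rewrite Hj; reflexivity].
Qed.

Lemma mpart_comp_le {a b c : C} (f : hom b c) (h : hom a b) :
  sub_le (mpart F (f ∘ h)) (mpart F f).
Proof.
  apply (mpart_le _ (mpart F f) (fe F f ∘ h) (fm_M F f)). simpl.
  rewrite comp_assoc, fact_eq. reflexivity.
Qed.

Lemma mpart_le_image {a b c : C} (f : hom b c) (g : hom a b) :
  sub_le (mpart F (f ∘ g)) (image F f (mpart F g)).
Proof.
  replace (f ∘ g) with ((f ∘ fm F g) ∘ fe F g)
    by (rewrite <- comp_assoc, fact_eq; reflexivity).
  apply mpart_comp_le.
Qed.

Lemma image_comp_le {x y z : C} (f : hom y z) (g : hom x y) (m : arr x) :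
  sub_le (image F (f ∘ g) m) (image F f (image F g m)).
Proof. unfold image at 1. rewrite <- comp_assoc. apply mpart_le_image. Qed.

Lemma mpart_compE {a b c : C} (f : hom b c) (e : hom a b) :
  fE F e -> sub_le (mpart F f) (mpart F (f ∘ e)).
Proof.
  intros He.
  destruct (diagonal He (fm_M F (f ∘ e)) (eq_sym (fact_eq F (f ∘ e)))) as [w [[_ Hw] _]].
  apply (mpart_le _ (mpart F (f ∘ e)) w (fm_M F _)). symmetry. exact Hw.
Qed.

Lemma image_mono {x y : C} (f : hom x y) (m n : arr x) :
  sub_le m n -> sub_le (image F f m) (image F f n).
Proof.
  intros [j Hj]. unfold image. rewrite Hj, comp_assoc. apply mpart_comp_le.
Qed.

Lemma pullback_M_mpart_le {a b c p : C} (f : hom a c) (n : hom b c)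
  (p1 : hom p a) (p2 : hom p b) :
  fM F n -> is_pullback f n p1 p2 -> sub_le (mpart F p1) (Arr p1).
Proof.
  intros Hn [Hc Hu].
  assert (Hsq : (f ∘ fm F p1) ∘ fe F p1 = n ∘ p2)
    by (rewrite <- comp_assoc, fact_eq; exact Hc).
  destruct (diagonal (fe_E F p1) Hn Hsq) as [w [[_ Hw] _]].
  destruct (Hu _ (fm F p1) w (eq_sym Hw)) as [u [[Hu1 _] _]].
  exists u. symmetry. exact Hu1.
Qed.

Lemma M_split_epi_iso (HF : proper F) {a b : C} (m : hom a b) (w : hom b a) :
  fM F m -> m ∘ w = idm b -> is_iso m.
Proof.
  intros Hm Hw. exists w. split; [|exact Hw].
  apply (proj2 HF _ _ m Hm). rewrite comp_assoc, Hw, comp_id_l, comp_id_r. reflexivity.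
Qed.

Lemma clg_factor (c : ClosureOp F) {a b d : C} (k : hom b d) (g : hom a b) (n : arr d) :
  fM F (amor n) -> sub_le (mpart F (k ∘ g)) n ->
  exists J, k ∘ amor (clg c g) = amor (cl c n) ∘ J.
Proof.
  intros Hn Hle. apply factor_of_mpart_le.
  eapply sub_le_trans; [apply (cl_cont c k (m := mpart F g) (fm_M F g))|].
  apply (cl_mono c); [apply fm_M | exact Hn |].
  eapply sub_le_trans; [apply (mpart_compE (k ∘ fm F g) _ (fe_E F g))|].
  unfold image. rewrite <- comp_assoc, fact_eq. exact Hle.
Qed.

End Factorization.

Section CompactEImage.
Context {C : Category} (L : FinComplete C) (F : FactSys C).
Hypothesis E_pullback : forall (a b c p : C) (f : hom a c) (g : hom b c)
  (p1 : hom p a) (p2 : hom p b), is_pullback f g p1 p2 -> fE F g -> fE F p1.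
Variable d : forall a : C, arr a -> arr a.
Hypothesis d_mono : forall a (m n : arr a),
  fM F (amor m) -> fM F (amor n) -> sub_le m n -> sub_le (d a m) (d a n).
Hypothesis d_cont : forall a b (f : hom a b) (m : arr a),
  fM F (amor m) -> sub_le (image F f (d a m)) (d b (image F f m)).

(* Pull [m] back along [e × 1], which lies in [E] as a pullback of [e], to a
   subobject [n] of [x × y]: the projection of [m] lies below that of [n], and
   [e × 1] maps [n] into [m]. *)
Lemma compact_E_image {x z : C} (e : hom x z) :
  fE F e -> compact L F d x -> compact L F d z.
Proof.
  intros He Hx y m Hm.
  set (g := pairing L (e ∘ pr1 L x y) (pr2 L x y)).
  assert (Hg : pr2 L z y ∘ g = pr2 L x y) by apply pairing_pr2.
  assert (HgE : fE F g) by (eapply E_pullback; [apply prod_map_pullback | exact He]).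
  pose proof (pb_is_pullback L g (amor m)) as Hpb.
  set (P := pb1 L g (amor m)) in *. set (e' := pb2 L g (amor m)) in *.
  assert (He' : fE F e')
    by (eapply E_pullback; [apply (is_pullback_sym _ _ _ _ Hpb) | exact HgE]).
  set (n := mpart F P).
  assert (Hproj : sub_le (image F (pr2 L z y) m) (image F (pr2 L x y) n)).
  { eapply sub_le_trans; [apply (mpart_compE F _ _ He')|].
    rewrite <- comp_assoc, <- (proj1 Hpb), comp_assoc, Hg. apply mpart_le_image. }
  assert (Hgn : sub_le (image F g n) m).
  { destruct (pullback_M_mpart_le F _ _ _ _ Hm Hpb) as [j Hj].
    apply (mpart_le F _ m (e' ∘ j) Hm). simpl in Hj.
    change (g ∘ fm F P = amor m ∘ (e' ∘ j)).
    rewrite Hj, comp_assoc, (proj1 Hpb). symmetry. apply comp_assoc. }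
  destruct (Hx y n (fm_M F P)) as [_ Hxn].
  split; [apply d_cont; exact Hm|].
  eapply sub_le_trans; [apply d_mono with (3 := Hproj); apply fm_M|].
  eapply sub_le_trans; [exact Hxn|].
  rewrite <- Hg. eapply sub_le_trans; [apply image_comp_le|].
  apply image_mono. eapply sub_le_trans; [apply d_cont, fm_M|].
  apply d_mono; [apply fm_M | exact Hm | exact Hgn].
Qed.

End CompactEImage.

Section Reflection.
Variable S : Setting.

Lemma rho_cancel {x : X S} {a : A S} (g g' : hom (Rf S x) a) :
  F1 (Inc S) g ∘ rho S x = F1 (Inc S) g' ∘ rho S x -> g = g'.
Proof.
  intros H. destruct (rho_univ S x a (F1 (Inc S) g ∘ rho S x)) as [g0 [_ Hu]].
  rewrite (Hu g eq_refl), (Hu g' (eq_sym H)). reflexivity.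
Qed.

Lemma Inc_comp_R_rho {x y : X S} {a : A S} (h : hom (Rf S y) a) (f : hom x y) :
  F1 (Inc S) (h ∘ F1 (Rf S) f) ∘ rho S x = (F1 (Inc S) h ∘ rho S y) ∘ f.
Proof. rewrite F1_comp, <- comp_assoc, rho_nat, comp_assoc. reflexivity. Qed.

Lemma rho_pairing {x : X S} {a b : A S} (f : hom x (Inc S a)) (g : hom x (Inc S b)) :
  exists k : hom (Rf S x) (prod (AL S) a b),
    F1 (Inc S) (pr1 (AL S) a b ∘ k) ∘ rho S x = f /\
    F1 (Inc S) (pr2 (AL S) a b ∘ k) ∘ rho S x = g.
Proof.
  destruct (rho_univ S x a f) as [f' [Hf _]]. destruct (rho_univ S x b g) as [g' [Hg _]].
  exists (pairing (AL S) f' g'). rewrite pairing_pr1, pairing_pr2. split; assumption.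
Qed.

Lemma Inc_sub_le_reflect {a : A S} (m n : arr a) :
  sub_le (Inc_arr m) (Inc_arr n) -> sub_le m n.
Proof.
  intros [j Hj]. destruct (Inc_full S _ _ j) as [j' Hj']. subst j.
  exists j'. apply (Inc_faithful S). rewrite F1_comp. exact Hj.
Qed.

Variable c : ClosureOp (AF S).

Lemma crho_mpart_le {x : X S} (m : arr x) : sub_le (mpart (XF S) (amor (crho c m))) (crho c m).
Proof.
  eapply pullback_M_mpart_le; [|apply pb_is_pullback].
  apply N_sub_M, cl_sub, fm_M.
Qed.

Lemma le_crho {x : X S} (m t : arr x)
  (v : hom (adom t) (Inc S (adom (clg c (F1 (Rf S) (amor m)))))) :
  rho S x ∘ amor t = F1 (Inc S) (amor (clg c (F1 (Rf S) (amor m)))) ∘ v -> sub_le t (crho c m).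
Proof. exact (le_preimage (XL S) (rho S x) (Inc_arr (clg c (F1 (Rf S) (amor m)))) t v). Qed.

Lemma crho_transport {x : X S} (m : arr x) {b : A S} (k : hom (Rf S x) b) (n : arr b) :
  fM (AF S) (amor n) -> sub_le (mpart (AF S) (k ∘ F1 (Rf S) (amor m))) n ->
  exists J, F1 (Inc S) k ∘ (rho S x ∘ amor (crho c m)) = F1 (Inc S) (amor (cl c n)) ∘ J.
Proof.
  intros Hn Hle. destruct (clg_factor _ c k _ n Hn Hle) as [J HJ].
  set (Cl := amor (clg c (F1 (Rf S) (amor m)))) in *.
  exists (F1 (Inc S) J ∘ pb2 (XL S) (rho S x) (F1 (Inc S) Cl)).
  assert (Hsq : rho S x ∘ amor (crho c m)
                = F1 (Inc S) Cl ∘ pb2 (XL S) (rho S x) (F1 (Inc S) Cl))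
    by exact (proj1 (pb_is_pullback _ _ _)).
  rewrite Hsq, comp_assoc, <- F1_comp, HJ, F1_comp. symmetry. apply comp_assoc.
Qed.

Lemma mpart_R_fm_le {x y : X S} {b : A S} (k : hom (Rf S y) b) (w : hom x y) :
  sub_le (mpart (AF S) (k ∘ F1 (Rf S) (fm (XF S) w))) (mpart (AF S) (k ∘ F1 (Rf S) w)).
Proof.
  replace (k ∘ F1 (Rf S) w) with ((k ∘ F1 (Rf S) (fm (XF S) w)) ∘ F1 (Rf S) (fe (XF S) w))
    by (rewrite <- comp_assoc, <- F1_comp, fact_eq; reflexivity).
  apply mpart_compE, RE_sub_F, fe_E.
Qed.

Lemma crho_mono {x : X S} (m n : arr x) : sub_le m n -> sub_le (crho c m) (crho c n).
Proof.
  intros [j Hj].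
  destruct (crho_transport m (idm _) (mpart (AF S) (F1 (Rf S) (amor n))) (fm_M _ _)) as [J HJ].
  { rewrite comp_id_l, Hj, F1_comp. apply mpart_comp_le. }
  rewrite F1_id, comp_id_l in HJ. exact (le_crho _ _ _ HJ).
Qed.

Lemma crho_cont {x y : X S} (f : hom x y) (m : arr x) :
  sub_le (image (XF S) f (crho c m)) (crho c (image (XF S) f m)).
Proof.
  destruct (crho_transport m (F1 (Rf S) f)
              (mpart (AF S) (F1 (Rf S) (amor (image (XF S) f m)))) (fm_M _ _)) as [J HJ].
  { rewrite <- F1_comp, <- (fact_eq (XF S) (f ∘ amor m)), F1_comp. apply mpart_comp_le. }
  rewrite comp_assoc, rho_nat, <- comp_assoc in HJ.
  destruct (le_crho _ (Arr (f ∘ amor (crho c m))) _ HJ) as [u Hu].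
  eapply sub_le_trans; [|apply crho_mpart_le].
  change (f ∘ amor (crho c m) = amor (crho c (image (XF S) f m)) ∘ u) in Hu.
  unfold image at 1. rewrite Hu. apply mpart_comp_le.
Qed.

Lemma Inc_clg_le_crho {a b : A S} (u : hom b a) (t : arr (Inc S a))
  (v : hom (Inc S b) (adom t)) :
  F1 (Inc S) u = amor t ∘ v -> sub_le (Inc_arr (clg c u)) (crho c t).
Proof.
  intros Huv.
  destruct (Inc_full S _ _ (rho S (Inc S a))) as [ra Hra].
  destruct (Inc_full S _ _ (rho S (Inc S b))) as [rb Hrb].
  destruct (clg_factor _ c ra u (mpart (AF S) (F1 (Rf S) (amor t))) (fm_M _ _)) as [J HJ].
  { assert (Hnat : ra ∘ u = F1 (Rf S) (amor t) ∘ (F1 (Rf S) v ∘ rb)).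
    { apply (Inc_faithful S).
      rewrite comp_assoc, <- F1_comp, <- Huv, !F1_comp, Hra, Hrb. symmetry. apply rho_nat. }
    rewrite Hnat. apply mpart_comp_le. }
  apply (le_crho t (Inc_arr (clg c u)) (F1 (Inc S) J)). simpl.
  rewrite <- Hra, <- !F1_comp, HJ. reflexivity.
Qed.

Lemma crho_dense_of_rho_factor {x D : X S} (t : hom D (Inc S (Rf S x))) (s : hom x D) :
  t ∘ s = rho S x -> sub_le (Arr (idm _)) (crho c (Arr t)).
Proof.
  intros Hts.
  destruct (rho_univ S x _ (rho S D ∘ s)) as [w [Hw _]].
  destruct (Inc_full S _ _ (rho S (Inc S (Rf S x)))) as [r Hr].
  assert (Hr_factor : r = F1 (Rf S) t ∘ w).
  { apply rho_cancel.
    rewrite Hr, F1_comp, <- comp_assoc, Hw, comp_assoc, rho_nat, <- comp_assoc, Hts.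
    reflexivity. }
  destruct (cl_ext c (m := mpart (AF S) (F1 (Rf S) t)) (fm_M _ _)) as [j Hj].
  apply (le_crho (Arr t) (Arr (idm _)) (F1 (Inc S) (j ∘ fe (AF S) (F1 (Rf S) t) ∘ w))).
  simpl in *. unfold clg.
  rewrite comp_id_r, <- Hr, Hr_factor, <- F1_comp, !comp_assoc, <- Hj, fact_eq.
  reflexivity.
Qed.

(* The graph of [m] is the preimage of the diagonal of [a] under [m × 1],
   and that diagonal is [c]-closed. *)
Lemma crho_graph_le {a : A S} {z : X S} (m : hom z (Inc S a)) :
  c_separated (AL S) c a ->
  sub_le (crho c (mpart (XF S) (pairing (XL S) (idm z) m))) (Arr (pairing (XL S) (idm z) m)).
Proof.
  intros [[j Hδ] _]. simpl in Hδ.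
  set (γ := pairing (XL S) (idm z) m).
  destruct (rho_pairing (m ∘ pr1 (XL S) z (Inc S a)) (pr2 (XL S) z (Inc S a)))
    as [k [Hk1 Hk2]].
  destruct (rho_univ S z a m) as [g [Hg _]].
  assert (Hkγ : k ∘ F1 (Rf S) γ = diag (AL S) a ∘ g).
  { apply pairing_ext; apply rho_cancel; rewrite !comp_assoc, Inc_comp_R_rho;
      unfold diag; rewrite ?pairing_pr1, ?pairing_pr2, comp_id_l, Hg, ?Hk1, ?Hk2;
      unfold γ; rewrite <- ?comp_assoc, ?pairing_pr1, ?pairing_pr2, ?comp_id_r; reflexivity. }
  destruct (crho_transport (mpart (XF S) γ) k (mpart (AF S) (diag (AL S) a)) (fm_M _ _))
    as [J HJ].
  { eapply sub_le_trans; [apply mpart_R_fm_le|]. rewrite Hkγ. apply mpart_comp_le. }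
  set (p := amor (crho c (mpart (XF S) γ))) in *.
  assert (Hpr : forall q : hom (prod (AL S) a a) a, q ∘ diag (AL S) a = idm a ->
            (F1 (Inc S) (q ∘ k) ∘ rho S _) ∘ p = F1 (Inc S) j ∘ J).
  { intros q Hq. unfold clg in Hδ.
    rewrite F1_comp, <- !comp_assoc, HJ, Hδ, comp_assoc, <- !F1_comp, comp_assoc, Hq.
    rewrite comp_id_l. reflexivity. }
  exists (pr1 (XL S) _ _ ∘ p). change (p = γ ∘ (pr1 (XL S) _ _ ∘ p)).
  unfold γ. apply pairing_ext.
  - rewrite comp_assoc, pairing_pr1, comp_id_l. reflexivity.
  - rewrite comp_assoc, pairing_pr2, comp_assoc, <- Hk1, <- Hk2.
    transitivity (F1 (Inc S) j ∘ J); [|symmetry];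
      apply Hpr; [apply pairing_pr2 | apply pairing_pr1].
Qed.

(* Test compactness of [Inc a] on the subobject of [Inc a × Inc y] induced by [n];
   on [Inc]-images the closures [c^ρ] and [c] agree, and [Inc] reflects [≤]. *)
Lemma compact_of_Inc_compact (a : A S) :
  compact (XL S) (XF S) (crho c) (Inc S a) -> compact (AL S) (AF S) (@cl _ _ c) a.
Proof.
  intros Ha y n Hn. split; [exact (cl_cont c _ Hn)|].
  set (φ := pairing (XL S) (F1 (Inc S) (pr1 (AL S) a y)) (F1 (Inc S) (pr2 (AL S) a y))).
  set (N := mpart (XF S) (φ ∘ F1 (Inc S) (amor n))).
  destruct (Ha (Inc S y) N (fm_M _ _)) as [_ HaN].
  apply Inc_sub_le_reflect.
  eapply sub_le_trans; [|eapply sub_le_trans; [exact HaN|]].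
  - apply (Inc_clg_le_crho (pr2 (AL S) a y ∘ amor n) (image (XF S) (pr2 (XL S) _ _) N)
             (fe (XF S) (pr2 (XL S) _ _ ∘ amor N) ∘ fe (XF S) (φ ∘ F1 (Inc S) (amor n)))).
    simpl. rewrite comp_assoc, fact_eq, <- comp_assoc, fact_eq, comp_assoc.
    unfold φ. rewrite pairing_pr2. apply F1_comp.
  - destruct (rho_pairing (pr1 (XL S) (Inc S a) (Inc S y)) (pr2 (XL S) (Inc S a) (Inc S y)))
      as [s [Hs1 Hs2]].
    destruct (rho_univ S (Inc S (adom n)) (adom n) (idm _)) as [ε [Hε _]].
    destruct (crho_transport N s n Hn) as [J HJ].
    { eapply sub_le_trans; [apply mpart_R_fm_le|]. apply (mpart_le _ _ n ε Hn).
      apply pairing_ext; apply rho_cancel; rewrite !comp_assoc, Inc_comp_R_rho, ?Hs1, ?Hs2;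
        unfold φ; rewrite comp_assoc, ?pairing_pr1, ?pairing_pr2, <- !F1_comp;
        symmetry; rewrite F1_comp, <- comp_assoc, Hε, comp_id_r; reflexivity. }
    apply (mpart_le _ _ (Inc_arr (image (AF S) (pr2 (AL S) a y) (cl c n)))
             (F1 (Inc S) (fe (AF S) (pr2 (AL S) a y ∘ amor (cl c n))) ∘ J)
             (N_sub_M S _ _ _ (fm_M _ _))).
    cbn [amor Inc_arr image mpart].
    rewrite <- Hs2, F1_comp, <- !comp_assoc, HJ, comp_assoc, <- F1_comp.
    rewrite comp_assoc, <- F1_comp, fact_eq. reflexivity.
Qed.

Lemma crho_compact_E_image (HE : E_pullback_stable S) {x z : X S} (e : hom x z) :
  fE (XF S) e -> compact (XL S) (XF S) (crho c) x -> compact (XL S) (XF S) (crho c) z.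
Proof.
  apply compact_E_image; [exact HE | intros; apply crho_mono; assumption | intros; apply crho_cont].
Qed.

Lemma rho_M_part_iso {x REx : X S} (rhoE : hom x REx) (rhoM : hom REx (Inc S (Rf S x))) :
  fM (XF S) rhoM -> rhoM ∘ rhoE = rho S x ->
  compact (XL S) (XF S) (crho c) REx -> c_separated (AL S) c (Rf S x) -> is_iso rhoM.
Proof.
  intros HrhoM Hfac Hcompact Hsep.
  set (γ := pairing (XL S) (idm REx) rhoM).
  set (π := pr2 (XL S) REx (Inc S (Rf S x))).
  destruct (Hcompact _ (mpart (XF S) γ) (fm_M _ _)) as [_ Hγ].
  assert (Hdense : sub_le (Arr (idm _)) (crho c (image (XF S) π (mpart (XF S) γ)))).
  { apply (crho_dense_of_rho_factor (fm (XF S) (π ∘ fm (XF S) γ))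
             (fe (XF S) (π ∘ fm (XF S) γ) ∘ fe (XF S) γ ∘ rhoE)).
    rewrite !comp_assoc, fact_eq, <- (comp_assoc π), fact_eq.
    unfold π, γ. rewrite pairing_pr2. exact Hfac. }
  assert (Hgraph : sub_le (image (XF S) π (crho c (mpart (XF S) γ))) (Arr rhoM)).
  { eapply sub_le_trans; [apply image_mono, crho_graph_le, Hsep|].
    apply (mpart_le _ _ (Arr rhoM) (idm _) HrhoM).
    unfold π, γ. simpl. rewrite pairing_pr2, comp_id_r. reflexivity. }
  destruct (sub_le_trans _ _ _ (sub_le_trans _ _ _ Hdense Hγ) Hgraph) as [w Hw].
  apply (M_split_epi_iso _ (XF_proper S) rhoM w HrhoM). symmetry. exact Hw.
Qed.

End Reflection.

Theorem proposition2p6 :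
  forall (S : Setting), E_pullback_stable S ->
  forall (c : ClosureOp (AF S)) (x : X S),
    compact (XL S) (XF S) (crho c) x ->
  forall (REx : X S) (rhoE : hom x REx) (rhoM : hom REx (Inc S (Rf S x))),
    fE (XF S) rhoE -> fM (XF S) rhoM -> rhoM ∘ rhoE = rho S x ->
    compact (XL S) (XF S) (crho c) REx /\
    (c_separated (AL S) c (Rf S x) ->
       fE (XF S) (rho S x) /\ compact (AL S) (AF S) (@cl _ _ c) (Rf S x)).
Proof.
  intros S HE c x Hx REx rhoE rhoM HrhoE HrhoM Hfac.
  assert (HREx : compact (XL S) (XF S) (crho c) REx)
    by exact (crho_compact_E_image S c HE rhoE HrhoE Hx).
  split; [exact HREx|]. intros Hsep.
  destruct (rho_M_part_iso S c rhoE rhoM HrhoM Hfac HREx Hsep) as [rhoM' [Hl Hr]].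
  assert (Hrho : fE (XF S) (rho S x)).
  { rewrite <- Hfac.
    exact (HE _ _ _ _ _ _ _ _ (iso_comp_pullback rhoE rhoM rhoM' Hl Hr) HrhoE). }
  split; [exact Hrho|].
  exact (compact_of_Inc_compact S c _ (crho_compact_E_image S c HE (rho S x) Hrho Hx)).
Qed.
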